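(* Let $P$ be the non-symmetric operad of sets in which $P(n)$ is the set of all $n$-tuples $(f_1,\dots,f_n)$ of order-preserving continuous maps $f_i:[0,1)\to[0,1)$ such that whenever $i<j$ and $t_i,t_j\in[0,1)$ we have $f_i(t_i)<f_j(t_j)$; the identity is $\mathrm{id}_{[0,1)}\in P(1)$, and composition is $(f_1,\dots,f_n)\circ((f_1^1,\dots,f_1^{k_1}),\dots,(f_n^1,\dots,f_n^{k_n}))=(f_1f_1^1,\dots,f_1f_1^{k_1},\dots,f_nf_n^1,\dots,f_nf_n^{k_n})$. Then: (1) an element $g\in P(1)$ is constant (in the operadic sense below) if and only if the map $g:[0,1)\to[0,1)$ is constant; (2) an element $(f_1,\dots,f_n)\in P(n)$ is surjective (in the operadic sense below) if and only if the union of the images of $f_1,\dots,f_n$ is $[0,1)$. Moreover both statements remain true when $P$ is replaced by its reverse $\overline{P}$.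
   Context: For a non-symmetric operad of sets $Q$ (sets $Q(n)$, identity $\mathrm{id}\in Q(1)$, composition $\theta\circ(\theta_1,\dots,\theta_n)$): an element $\gamma\in Q(1)$ is called constant if for all $n\in\mathbb{N}$ and all $\phi,\phi'\in Q(n)$, $\gamma\circ(\phi)=\gamma\circ(\phi')$; an element $\phi\in Q(n)$ is called surjective if for all $\theta,\theta'\in Q(1)$, $\theta\circ(\phi)=\theta'\circ(\phi)$ implies $\theta=\theta'$. The reverse $\overline{Q}$ of $Q$ has $\overline{Q}(n)=Q(n)$, the same identity, and composition $\theta\circ_{\mathrm{rev}}(\theta_1,\dots,\theta_n)=\theta\circ(\theta_n,\dots,\theta_1)$. An element $(g)\in P(1)$ is written simply $g$. *)

From Stdlib Require Import Reals.
From mathcomp Require Import all_boot.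
Set Implicit Arguments.
Unset Strict Implicit.
Unset Printing Implicit Defensive.

Local Open Scope R_scope.

Definition I01 : Type := {x : R | 0 <= x < 1}.
Definition map01 : Type := I01 -> I01.

Definition order_preserving (f : map01) : Prop :=
  forall s t : I01, proj1_sig s <= proj1_sig t ->
    proj1_sig (f s) <= proj1_sig (f t).

Definition continuous01 (f : map01) : Prop :=
  forall (s : I01) (eps : R), 0 < eps ->
    exists delta : R, 0 < delta /\
      forall t : I01, Rabs (proj1_sig t - proj1_sig s) < delta ->
        Rabs (proj1_sig (f t) - proj1_sig (f s)) < eps.

Definition Ptup (n : nat) : Type := 'I_n -> map01.

Definition inP (n : nat) (phi : Ptup n) : Prop :=
  (forall i : 'I_n, order_preserving (phi i) /\ continuous01 (phi i)) /\
  (forall i j : 'I_n, (i < j)%N ->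
     forall ti tj : I01, proj1_sig (phi i ti) < proj1_sig (phi j tj)).

(** Operadic composition theta o (theta_1) for theta in arity 1 (the only
    composites the notions "constant"/"surjective" use): the single input
    is given as a family indexed by 'I_1; the result is
    (g f_1, ..., g f_n). *)
Definition compP (g : Ptup 1) (n : nat) (phis : 'I_1 -> Ptup n) : Ptup n :=
  fun i t => g ord0 (phis ord0 i t).

(** Composition in the reverse operad: theta o_rev (theta_1,...,theta_k)
    = theta o (theta_k,...,theta_1); here k = 1. *)
Definition compPrev (g : Ptup 1) (n : nat) (phis : 'I_1 -> Ptup n) : Ptup n :=
  compP g (fun j => phis (rev_ord j)).

Definition unary_comp : Type :=
  Ptup 1 -> forall n : nat, ('I_1 -> Ptup n) -> Ptup n.

Definition op_constant (c : unary_comp) (gamma : Ptup 1) : Prop :=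
  forall (n : nat) (phi phi' : Ptup n), inP phi -> inP phi' ->
    c gamma n (fun _ => phi) = c gamma n (fun _ => phi').

Definition op_surjective (c : unary_comp) (n : nat) (phi : Ptup n) : Prop :=
  forall theta theta' : Ptup 1, inP theta -> inP theta' ->
    c theta n (fun _ => phi) = c theta' n (fun _ => phi) -> theta = theta'.

Definition map_constant (g : Ptup 1) : Prop :=
  exists y : I01, forall t : I01, g ord0 t = y.

Definition images_cover (n : nat) (phi : Ptup n) : Prop :=
  forall y : I01, exists (i : 'I_n) (t : I01), phi i t = y.

From Stdlib Require Import Reals Lra ProofIrrelevance FunctionalExtensionality Classical.
From mathcomp Require Import all_boot.
Set Implicit Arguments.
Unset Strict Implicit.
Local Open Scope R_scope.

(* Composing with a unary element g is postcomposition with the map g, so g is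
   operadically constant iff g \o f does not depend on f, which for constant
   inputs f says that g is constant; and if the images of phi cover [0,1),
   then theta \o phi determines theta.  Conversely, if y is missed, the image
   of each monotone continuous f_i is an interval avoiding y, so finitely many
   of them leave a whole gap (y, b) uncovered.  The map of P(1) collapsing
   [y, (y+b)/2] onto y and stretching [(y+b)/2, b] onto [y, b] is not the
   identity but agrees with it on every image.  In the reverse operad a
   composite with a single input is unchanged, so both statements carry over. *)

Lemma I01_eq (a b : I01) : proj1_sig a = proj1_sig b -> a = b.
Proof. apply eq_sig_hprop; intros; apply proof_irrelevance. Qed.

Definition zero01 : I01 := exist _ 0 (conj (Rle_refl 0) Rlt_0_1).

Lemma lipschitz_continuous01 (f : map01) (k : R) : 0 < k ->
  (forall s t : I01, Rabs (proj1_sig (f t) - proj1_sig (f s))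
                     <= k * Rabs (proj1_sig t - proj1_sig s)) ->
  continuous01 f.
Proof.
intros Hk Hf s eps Heps; exists (eps / k); split.
- apply Rdiv_lt_0_compat; assumption.
- intros t Ht; eapply Rle_lt_trans; [apply Hf|].
  assert (Hkeps : k * (eps / k) = eps) by (field; lra).
  apply Rmult_lt_compat_l with (r := k) in Ht; lra.
Qed.

Lemma inP1 (f : map01) :
  order_preserving f -> continuous01 f -> inP (fun _ : 'I_1 => f).
Proof.
intros Hmon Hcont; split; [intros _; split; assumption|].
intros i j; rewrite (ord1 i) (ord1 j) ltnn //.
Qed.

Lemma id_inP : inP (fun _ : 'I_1 => fun x : I01 => x).
Proof.
apply inP1; [intros s t; exact id|].
apply lipschitz_continuous01 with 1; [lra|]; intros s t; lra.
Qed.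

Lemma const_inP (c : I01) : inP (fun _ : 'I_1 => fun _ : I01 => c).
Proof.
apply inP1; [intros s t _; apply Rle_refl|].
apply lipschitz_continuous01 with 1; [lra|]; intros s t.
rewrite Rminus_diag Rabs_R0 Rmult_1_l; apply Rabs_pos.
Qed.

(* [clamp s t] retracts R onto the segment [s, t], to apply the real IVT. *)
Definition clamp_val (s t : I01) (x : R) : R :=
  Rmax (proj1_sig s) (Rmin x (proj1_sig t)).

Lemma clamp_val_range (s t : I01) (x : R) : 0 <= clamp_val s t x < 1.
Proof.
destruct s as [s Hs], t as [t Ht]; unfold clamp_val, Rmax, Rmin; simpl.
repeat destruct Rle_dec; lra.
Qed.

Definition clamp (s t : I01) (x : R) : I01 := exist _ _ (clamp_val_range s t x).

Lemma clamp_lipschitz (s t : I01) (x x' : R) :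
  Rabs (proj1_sig (clamp s t x) - proj1_sig (clamp s t x')) <= Rabs (x - x').
Proof.
unfold clamp, clamp_val, Rmax, Rmin, Rabs; simpl.
repeat (destruct Rle_dec || destruct Rcase_abs); lra.
Qed.

Lemma clamp_id (s t u : I01) :
  proj1_sig s <= proj1_sig u <= proj1_sig t -> clamp s t (proj1_sig u) = u.
Proof.
intros Hu; apply I01_eq; unfold clamp, clamp_val, Rmax, Rmin; simpl.
repeat destruct Rle_dec; lra.
Qed.

Lemma ivt01 (f : map01) (s t : I01) (y : R) :
  continuous01 f -> proj1_sig s < proj1_sig t ->
  proj1_sig (f s) < y < proj1_sig (f t) ->
  exists u : I01, proj1_sig (f u) = y.
Proof.
intros Hcont Hst Hy.
set F := fun x => proj1_sig (f (clamp s t x)) - y.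
assert (HF : continuity F).
{ intros x eps Heps.
  destruct (Hcont (clamp s t x) eps Heps) as [d [Hd Hfd]].
  exists d; split; [exact Hd|]; intros z [_ Hz]; simpl in *; unfold R_dist in *.
  unfold F; replace (_ - y - _) with
    (proj1_sig (f (clamp s t z)) - proj1_sig (f (clamp s t x))) by ring.
  apply Hfd; eapply Rle_lt_trans; [apply clamp_lipschitz|exact Hz]. }
destruct (IVT F (proj1_sig s) (proj1_sig t) HF Hst) as [z [_ Hz]].
- unfold F; rewrite clamp_id; lra.
- unfold F; rewrite clamp_id; lra.
- exists (clamp s t z); unfold F in Hz; lra.
Qed.

Lemma below_omitted_value (f : map01) (y : R) :
  order_preserving f -> continuous01 f ->
  (forall t, proj1_sig (f t) <> y) ->
  proj1_sig (f zero01) < y -> forall t, proj1_sig (f t) < y.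
Proof.
intros Hmon Hcont Homit Hf0 t; apply Rnot_le_lt; intros Hyt.
destruct (Rle_lt_or_eq_dec _ _ Hyt) as [Hlt|Heq]; [|exact (Homit t (esym Heq))].
assert (Ht : proj1_sig zero01 < proj1_sig t).
{ apply Rnot_le_lt; intros Ht; have := Hmon t zero01 Ht; lra. }
destruct (ivt01 Hcont Ht (conj Hf0 Hlt)) as [u Hu]; exact (Homit u Hu).
Qed.

Lemma big_Rmin_le (I : finType) (F : I -> R) (j : I) : \big[Rmin/1]_i F i <= F j.
Proof.
have : j \in index_enum I by rewrite mem_index_enum.
elim: (index_enum I) => // a r IH; rewrite in_cons big_cons => /orP [/eqP ->|/IH Hr].
- apply Rmin_l.
- exact (Rle_trans _ _ _ (Rmin_r _ _) Hr).
Qed.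

Lemma omitted_value_gap n (phi : Ptup n) (y : I01) :
  (forall i, order_preserving (phi i) /\ continuous01 (phi i)) ->
  (forall i t, phi i t <> y) ->
  exists b, proj1_sig y < b <= 1 /\
    forall i t, proj1_sig (phi i t) <= proj1_sig y \/ b <= proj1_sig (phi i t).
Proof.
intros Hphi Homit.
assert (Hval : forall i t, proj1_sig (phi i t) <> proj1_sig y)
  by (intros i t E; exact (Homit i t (I01_eq E))).
destruct y as [y Hy]; simpl in Hval |- *.
(* Components starting below [y] stay below it, so only the others bound the gap. *)
pose start i := if Rle_dec (proj1_sig (phi i zero01)) y then 1
                else proj1_sig (phi i zero01).
exists (\big[Rmin/1]_(i < n) start i); split; [split|].
- refine (big_ind (fun x => y < x) _ _ _); [lra|intros; apply Rmin_glb_lt; assumption|].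
  intros i _; unfold start; destruct Rle_dec; simpl; lra.
- refine (big_ind (fun x => x <= 1) _ _ _); [lra| |].
  { intros x x' Hx _; exact (Rle_trans _ _ _ (Rmin_l x x') Hx). }
  intros i _; unfold start; destruct Rle_dec; simpl; [lra|].
  destruct (phi i zero01) as [v Hv]; simpl; lra.
- intros i t; destruct (Hphi i) as [Hmon Hcont].
  destruct (Rle_dec (proj1_sig (phi i zero01)) y) as [H0|H0].
  + left; apply Rlt_le, (below_omitted_value Hmon Hcont (Hval i)).
    destruct (Rle_lt_or_eq_dec _ _ H0) as [H|H]; [exact H|exfalso; exact (Hval i _ H)].
  + right; apply Rle_trans with (start i); [apply big_Rmin_le|].
    unfold start; destruct Rle_dec; simpl; [contradiction|].
    apply Hmon; destruct t as [tv Ht]; simpl; lra.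
Qed.

Definition collapse_val (y b x : R) : R := Rmin x (Rmax y (2 * x - b)).

Lemma collapse_val_range (y : I01) (b : R) (x : I01) :
  0 <= collapse_val (proj1_sig y) b (proj1_sig x) < 1.
Proof.
destruct y as [y Hy], x as [x Hx]; unfold collapse_val, Rmin, Rmax; simpl.
repeat destruct Rle_dec; lra.
Qed.

Definition collapse (y : I01) (b : R) : map01 :=
  fun x => exist _ _ (collapse_val_range y b x).

Lemma collapse_val_fixed (y b x : R) : x <= y \/ b <= x -> collapse_val y b x = x.
Proof. unfold collapse_val, Rmin, Rmax; repeat destruct Rle_dec; lra. Qed.

Lemma collapse_val_mid (y b : R) : y < b -> collapse_val y b ((y + b) / 2) = y.
Proof. unfold collapse_val, Rmin, Rmax; repeat destruct Rle_dec; lra. Qed.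

Lemma collapse_inP (y : I01) (b : R) : inP (fun _ : 'I_1 => collapse y b).
Proof.
apply inP1.
- intros [s Hs] [t Ht]; unfold collapse, collapse_val, Rmin, Rmax; simpl.
  repeat destruct Rle_dec; lra.
- apply lipschitz_continuous01 with 2; [lra|].
  intros [s Hs] [t Ht]; unfold collapse, collapse_val, Rmin, Rmax, Rabs; simpl.
  repeat (destruct Rle_dec || destruct Rcase_abs); lra.
Qed.

Lemma collapse_neq_id (y : I01) (b : R) :
  proj1_sig y < b <= 1 -> collapse y b <> (fun x => x).
Proof.
destruct y as [y Hy]; simpl; intros Hb E.
assert (Hm : 0 <= (y + b) / 2 < 1) by lra.
have := f_equal (fun h : map01 => proj1_sig (h (exist _ _ Hm))) E; simpl.
rewrite collapse_val_mid; lra.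
Qed.

Lemma op_constantP (g : Ptup 1) : op_constant compP g <-> map_constant g.
Proof.
split.
- intros Hc; exists (g ord0 zero01); intros t.
  exact (f_equal (fun h => h ord0 zero01) (Hc 1%N _ _ (const_inP t) (const_inP zero01))).
- intros [y Hy] n phi phi' _ _; unfold compP.
  apply functional_extensionality => i; apply functional_extensionality => t.
  rewrite !Hy //.
Qed.

Lemma images_cover_op_surjective n (phi : Ptup n) :
  images_cover phi -> op_surjective compP phi.
Proof.
intros Hcov theta theta' _ _ E.
apply functional_extensionality => j; rewrite (ord1 j).
apply functional_extensionality => y; destruct (Hcov y) as [i [t <-]].
exact (f_equal (fun h => h i t) E).
Qed.

Lemma op_surjective_images_cover n (phi : Ptup n) :
  inP phi -> op_surjective compP phi -> images_cover phi.
Proof.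
intros [Hphi _] Hsurj y; apply NNPP; intros Hy.
assert (Homit : forall i t, phi i t <> y)
  by (intros i t E; apply Hy; exists i, t; exact E).
destruct (omitted_value_gap Hphi Homit) as [b [Hb Hgap]].
apply (collapse_neq_id Hb), esym.
refine (f_equal (fun h => h ord0) (Hsurj _ _ id_inP (collapse_inP y b) _)).
unfold compP; apply functional_extensionality => i; apply functional_extensionality => t.
apply I01_eq; symmetry; apply collapse_val_fixed, Hgap.
Qed.

Lemma op_surjectiveP n (phi : Ptup n) :
  inP phi -> (op_surjective compP phi <-> images_cover phi).
Proof.
intros Hphi; split; [exact (op_surjective_images_cover Hphi)|].
exact (@images_cover_op_surjective n phi).
Qed.

Lemma op_constant_rev (g : Ptup 1) : op_constant compPrev g <-> op_constant compP g.
Proof. reflexivity. Qed.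

Lemma op_surjective_rev n (phi : Ptup n) :
  op_surjective compPrev phi <-> op_surjective compP phi.
Proof. reflexivity. Qed.

Theorem mainTheorem3 :
  ((forall g : Ptup 1, inP g -> (op_constant compP g <-> map_constant g)) /\
   (forall (n : nat) (phi : Ptup n), inP phi ->
      (op_surjective compP phi <-> images_cover phi))) /\
  ((forall g : Ptup 1, inP g -> (op_constant compPrev g <-> map_constant g)) /\
   (forall (n : nat) (phi : Ptup n), inP phi ->
      (op_surjective compPrev phi <-> images_cover phi))).
Proof.
split; split.
- intros g _; exact (op_constantP g).
- exact op_surjectiveP.
- intros g _; exact (iff_trans (op_constant_rev g) (op_constantP g)).
- intros n phi Hphi; exact (iff_trans (op_surjective_rev phi) (op_surjectiveP Hphi)).
Qed.
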